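(* Let $D$ be a set of pairwise intersecting closed disks in the plane. Let $D'$ be the set of disks obtained from $D$ by multiplying the radius of each disk by $2/\sqrt{3}$ while keeping its center. Then all disks in $D'$ have a common point. Moreover, the factor $2/\sqrt{3}$ is tight: for every $\lambda<2/\sqrt{3}$ there exists a set of pairwise intersecting closed disks such that the disks obtained by multiplying their radii by $\lambda$ (keeping centers) have no common point.
   Context: Two disks intersect if they have at least one common point (touching counts as intersecting). *)

From Stdlib Require Import Reals List.
Open Scope R_scope.

Definition dist2 (p q : R * R) : R :=
  sqrt ((fst p - fst q) ^ 2 + (snd p - snd q) ^ 2).

Record disk := mkDisk { center : R * R ; radius : R }.

Definition in_disk (p : R * R) (d : disk) : Prop := dist2 p (center d) <= radius d.

Definition disks_intersect (d1 d2 : disk) : Prop :=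
  exists p, in_disk p d1 /\ in_disk p d2.

Definition scale_disk (lam : R) (d : disk) : disk := mkDisk (center d) (lam * radius d).

Definition valid_disks (D : list disk) : Prop := forall d, In d D -> 0 < radius d.

Definition pairwise_intersecting (D : list disk) : Prop :=
  forall d1 d2, In d1 D -> In d2 D -> disks_intersect d1 d2.

Definition common_point (D : list disk) : Prop :=
  exists p, forall d, In d D -> in_disk p d.

(* Let p minimise mu = max_d |p - c_d|^2 / r_d^2 (the maximum is continuous and grows
   at infinity, so a minimiser exists), and let w_d = (p - c_d) / r_d, so |w_d|^2 = mu
   for the disks attaining the maximum.  If two of these vectors make an angle of at
   least 120 degrees, then |c_a - c_b| <= r_a + r_b gives
   mu (r_a^2 + r_a r_b + r_b^2) <= (r_a + r_b)^2 <= 4/3 (r_a^2 + r_a r_b + r_b^2).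
   Otherwise pick the two active vectors w_a, w_b furthest apart: in the plane every
   active w_d then has positive inner product with w_a + w_b, so moving p slightly in
   the direction -(w_a + w_b) decreases every active term, against minimality.  Hence
   mu <= 4/3 and p lies in every disk scaled by 2/sqrt 3.  Three unit disks centred at
   the vertices of an equilateral triangle of side 2 show the factor is optimal. *)

From Stdlib Require Import Reals List Lra Psatz Classical ClassicalEpsilon.
Open Scope R_scope.

Definition sqdist (p q : R * R) : R := (fst p - fst q) ^ 2 + (snd p - snd q) ^ 2.

Lemma sqdist_ge0 p q : 0 <= sqdist p q.
Proof.
  unfold sqdist.
  pose proof (pow2_ge_0 (fst p - fst q)); pose proof (pow2_ge_0 (snd p - snd q)); lra.
Qed.

Lemma dist2_sym p q : dist2 p q = dist2 q p.
Proof. unfold dist2; f_equal; ring. Qed.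

Lemma dist2_triangle p q r : dist2 p r <= dist2 p q + dist2 q r.
Proof.
  unfold dist2; fold (sqdist p r) (sqdist p q) (sqdist q r).
  set (A := sqrt (sqdist p q)); set (B := sqrt (sqdist q r)).
  assert (HA : A * A = sqdist p q) by apply sqrt_sqrt, sqdist_ge0.
  assert (HB : B * B = sqdist q r) by apply sqrt_sqrt, sqdist_ge0.
  assert (A0 : 0 <= A) by apply sqrt_pos.
  assert (B0 : 0 <= B) by apply sqrt_pos.
  rewrite <- (sqrt_pow2 (A + B)) by lra; apply sqrt_le_1_alt.
  unfold sqdist in *.
  set (u1 := fst p - fst q) in *; set (u2 := snd p - snd q) in *.
  set (v1 := fst q - fst r) in *; set (v2 := snd q - snd r) in *.
  replace (fst p - fst r) with (u1 + v1) by (unfold u1, v1; ring).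
  replace (snd p - snd r) with (u2 + v2) by (unfold u2, v2; ring).
  assert (CS : u1 * v1 + u2 * v2 <= A * B).
  { assert ((u1 * v1 + u2 * v2) ^ 2 <= (A * B) ^ 2).
    { replace ((A * B) ^ 2) with ((A * A) * (B * B)) by ring.
      rewrite HA, HB.
      pose proof (pow2_ge_0 (u1 * v2 - u2 * v1)); nra. }
    assert (0 <= A * B) by (apply Rmult_le_pos; assumption).
    nra. }
  nra.
Qed.

Lemma in_disk_sqdist p d :
  in_disk p d <-> 0 <= radius d /\ sqdist p (center d) <= radius d ^ 2.
Proof.
  unfold in_disk, dist2; fold (sqdist p (center d)); split.
  - intros H.
    assert (0 <= sqrt (sqdist p (center d))) by apply sqrt_pos.
    split; [lra|].
    rewrite <- (sqrt_sqrt (sqdist p (center d))) by apply sqdist_ge0.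
    nra.
  - intros [Hr H].
    rewrite <- (sqrt_pow2 (radius d)) by exact Hr.
    apply sqrt_le_1_alt, H.
Qed.

Lemma sqdist_dist2 p q : sqdist p q = dist2 p q ^ 2.
Proof.
  unfold dist2; fold (sqdist p q).
  rewrite <- Rsqr_pow2, Rsqr_sqrt; [reflexivity | apply sqdist_ge0].
Qed.

Lemma disks_intersect_sqdist d1 d2 :
  disks_intersect d1 d2 ->
  sqdist (center d1) (center d2) <= (radius d1 + radius d2) ^ 2.
Proof.
  intros [q [H1 H2]]; unfold in_disk in H1, H2.
  assert (Htri := dist2_triangle (center d1) q (center d2)).
  rewrite (dist2_sym (center d1) q) in Htri.
  rewrite sqdist_dist2; apply pow_incr; split; [apply sqrt_pos | lra].
Qed.


Lemma disks_intersect_of_sqdist d1 d2 :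
  0 < radius d1 -> 0 < radius d2 ->
  sqdist (center d1) (center d2) <= (radius d1 + radius d2) ^ 2 ->
  disks_intersect d1 d2.
Proof.
  destruct d1 as [[x1 y1] r1], d2 as [[x2 y2] r2]; unfold sqdist; cbn [fst snd center radius].
  intros H1 H2 H.
  set (k := r1 / (r1 + r2)).
  exists (x1 + k * (x2 - x1), y1 + k * (y2 - y1)).
  split; apply in_disk_sqdist; simpl; split; try lra; unfold sqdist; cbn [fst snd center radius].
  - replace ((x1 + k * (x2 - x1) - x1) ^ 2 + (y1 + k * (y2 - y1) - y1) ^ 2)
      with (k ^ 2 * ((x1 - x2) ^ 2 + (y1 - y2) ^ 2)) by ring.
    apply Rle_trans with (k ^ 2 * (r1 + r2) ^ 2).
    + apply Rmult_le_compat_l; [apply pow2_ge_0 | exact H].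
    + right; unfold k; field; lra.
  - replace ((x1 + k * (x2 - x1) - x2) ^ 2 + (y1 + k * (y2 - y1) - y2) ^ 2)
      with ((1 - k) ^ 2 * ((x1 - x2) ^ 2 + (y1 - y2) ^ 2)) by ring.
    apply Rle_trans with ((1 - k) ^ 2 * (r1 + r2) ^ 2).
    + apply Rmult_le_compat_l; [apply pow2_ge_0 | exact H].
    + right; unfold k; field; lra.
Qed.

Definition nsqdist (d : disk) (p : R * R) : R := sqdist p (center d) / radius d ^ 2.

Definition max_nsqdist (D : list disk) (p : R * R) : R :=
  fold_right (fun d acc => Rmax (nsqdist d p) acc) 0 D.

Lemma max_nsqdist_ge0 D p : 0 <= max_nsqdist D p.
Proof. induction D; simpl; [lra | eapply Rle_trans; [exact IHD | apply Rmax_r]]. Qed.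

Lemma nsqdist_le_max D p d : In d D -> nsqdist d p <= max_nsqdist D p.
Proof.
  induction D as [|e D IH]; simpl; [tauto|].
  intros [<- | Hd]; [apply Rmax_l | eapply Rle_trans; [exact (IH Hd) | apply Rmax_r]].
Qed.

Lemma max_nsqdist_lt D p mu :
  0 < mu -> (forall d, In d D -> nsqdist d p < mu) -> max_nsqdist D p < mu.
Proof. induction D; simpl; intros; [lra | apply Rmax_lub_lt; auto]. Qed.

Lemma max_nsqdist_attained D p :
  0 < max_nsqdist D p -> exists d, In d D /\ nsqdist d p = max_nsqdist D p.
Proof.
  induction D as [|e D IH]; simpl; [lra|].
  fold (max_nsqdist D p); intros H.
  destruct (Rle_dec (nsqdist e p) (max_nsqdist D p)) as [Hle | Hgt].
  - rewrite Rmax_right in * by exact Hle.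
    destruct (IH H) as [d [Hd Hmax]]; eauto.
  - rewrite Rmax_left in * by lra; eauto.
Qed.

Lemma Rmax_diff_le a b a' b' :
  Rabs (Rmax a' b' - Rmax a b) <= Rabs (a' - a) + Rabs (b' - b).
Proof. unfold Rmax, Rabs; repeat destruct Rle_dec; repeat destruct Rcase_abs; lra. Qed.

Lemma max_nsqdist_diff_le D p q (k : disk -> R) (e : R) :
  (forall d, In d D -> Rabs (nsqdist d q - nsqdist d p) <= k d * e) ->
  Rabs (max_nsqdist D q - max_nsqdist D p) <= fold_right (fun d acc => k d + acc) 0 D * e.
Proof.
  induction D as [|d D IH]; simpl; intros Hk.
  - rewrite Rminus_diag, Rabs_R0; lra.
  - eapply Rle_trans; [apply Rmax_diff_le|].
    rewrite Rmult_plus_distr_r; apply Rplus_le_compat; auto.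
Qed.

Lemma square_diff_le x x' a :
  Rabs (x' - x) <= 1 -> Rabs ((x' - a) ^ 2 - (x - a) ^ 2) <= (2 * Rabs (x - a) + 1) * Rabs (x' - x).
Proof.
  intros H.
  replace ((x' - a) ^ 2 - (x - a) ^ 2) with ((x' - x + 2 * (x - a)) * (x' - x)) by ring.
  rewrite Rabs_mult; apply Rmult_le_compat_r; [apply Rabs_pos|].
  eapply Rle_trans; [apply Rabs_triang|].
  rewrite Rabs_mult, (Rabs_pos_eq 2) by lra; lra.
Qed.

Lemma nsqdist_diff_fst d x x' y :
  0 < radius d -> Rabs (x' - x) <= 1 ->
  Rabs (nsqdist d (x', y) - nsqdist d (x, y))
  <= (2 * Rabs (x - fst (center d)) + 1) / radius d ^ 2 * Rabs (x' - x).
Proof.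
  intros Hr Hx; assert (Hr2 : 0 < radius d ^ 2) by (apply pow_lt; lra).
  unfold nsqdist, sqdist, Rdiv; cbn [fst snd].
  replace (_ - _) with (((x' - fst (center d)) ^ 2 - (x - fst (center d)) ^ 2) * / radius d ^ 2)
    by ring.
  rewrite Rabs_mult, (Rabs_pos_eq (/ _)) by (apply Rlt_le, Rinv_0_lt_compat, Hr2).
  rewrite Rmult_assoc, (Rmult_comm (/ _)), <- Rmult_assoc.
  apply Rmult_le_compat_r; [apply Rlt_le, Rinv_0_lt_compat, Hr2 | apply square_diff_le, Hx].
Qed.

Lemma nsqdist_diff_snd d x y y' :
  0 < radius d -> Rabs (y' - y) <= 1 ->
  Rabs (nsqdist d (x, y') - nsqdist d (x, y))
  <= (2 * Rabs (y - snd (center d)) + 1) / radius d ^ 2 * Rabs (y' - y).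
Proof.
  intros Hr Hy; assert (Hr2 : 0 < radius d ^ 2) by (apply pow_lt; lra).
  unfold nsqdist, sqdist, Rdiv; cbn [fst snd].
  replace (_ - _) with (((y' - snd (center d)) ^ 2 - (y - snd (center d)) ^ 2) * / radius d ^ 2)
    by ring.
  rewrite Rabs_mult, (Rabs_pos_eq (/ _)) by (apply Rlt_le, Rinv_0_lt_compat, Hr2).
  rewrite Rmult_assoc, (Rmult_comm (/ _)), <- Rmult_assoc.
  apply Rmult_le_compat_r; [apply Rlt_le, Rinv_0_lt_compat, Hr2 | apply square_diff_le, Hy].
Qed.

Lemma lipschitz_continuity_pt (f : R -> R) x K :
  (forall y, Rabs (y - x) <= 1 -> Rabs (f y - f x) <= K * Rabs (y - x)) ->
  continuity_pt f x.
Proof.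
  intros Hf eps Heps; unfold dist; simpl; unfold R_dist.
  assert (HK : 0 <= K).
  { specialize (Hf (x + 1)); replace (x + 1 - x) with 1 in Hf by ring.
    rewrite Rabs_R1 in Hf; pose proof (Rabs_pos (f (x + 1) - f x)); lra. }
  exists (Rmin 1 (eps / (K + 1))); split.
  - apply Rmin_pos; [lra | apply Rdiv_lt_0_compat; lra].
  - intros y [_ Hy].
    assert (H1 := Rmin_l 1 (eps / (K + 1))); assert (H2 := Rmin_r 1 (eps / (K + 1))).
    assert (Hd : (K + 1) * Rabs (y - x) < eps).
    { apply Rmult_lt_reg_r with (/ (K + 1)); [apply Rinv_0_lt_compat; lra|].
      replace ((K + 1) * Rabs (y - x) * / (K + 1)) with (Rabs (y - x)) by (field; lra).
      fold (eps / (K + 1)); lra. }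
    specialize (Hf y ltac:(lra)); pose proof (Rabs_pos (y - x)); nra.
Qed.

Lemma min_on_box (f : R -> R -> R) a b c d :
  a <= b -> c <= d ->
  (forall x y, continuity_pt (f x) y) ->
  (forall x, exists K, forall x' y,
      Rabs (x' - x) <= 1 -> Rabs (f x' y - f x y) <= K * Rabs (x' - x)) ->
  exists x y, a <= x <= b /\ c <= y <= d /\
    forall x' y', a <= x' <= b -> c <= y' <= d -> f x y <= f x' y'.
Proof.
  intros Hab Hcd Hcont Hlip.
  assert (Hymin : forall x, exists y, c <= y <= d /\ forall y', c <= y' <= d -> f x y <= f x y').
  { intros x; destruct (continuity_ab_min (f x) c d Hcd (fun y _ => Hcont x y)) as [y [Hy Hc]].
    eauto. }
  destruct (choice _ Hymin) as [ymin Hmin].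
  set (m x := f x (ymin x)).
  assert (Hm : forall x, continuity_pt m x).
  { intros x; destruct (Hlip x) as [K HK]; apply lipschitz_continuity_pt with K.
    intros x' Hx'; unfold m.
    destruct (Hmin x) as [Hx1 Hx2]; destruct (Hmin x') as [Hx'1 Hx'2].
    specialize (Hx2 _ Hx'1); specialize (Hx'2 _ Hx1).
    assert (B1 := HK x' (ymin x) Hx'); assert (B2 := HK x' (ymin x') Hx').
    apply Rabs_le; revert B1 B2; unfold Rabs; repeat destruct Rcase_abs; lra. }
  destruct (continuity_ab_min m a b Hab (fun x _ => Hm x)) as [x [Hx Hxb]].
  destruct (Hmin x) as [Hyb Hy].
  exists x, (ymin x); repeat split; try lra.
  intros x' y' Hx' Hy'; apply Rle_trans with (m x');
    [exact (Hx x' Hx') | apply (proj2 (Hmin x')), Hy'].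
Qed.

Lemma sqdist_ge_outside_square (q c : R * R) s :
  1 <= s ->
  ~ (fst c - s <= fst q <= fst c + s /\ snd c - s <= snd q <= snd c + s) ->
  s <= sqdist q c.
Proof.
  intros Hs Hout; unfold sqdist.
  pose proof (pow2_ge_0 (fst q - fst c)); pose proof (pow2_ge_0 (snd q - snd c)).
  apply not_and_or in Hout; destruct Hout as [Hout | Hout]; apply not_and_or in Hout; nra.
Qed.

Lemma max_nsqdist_has_min D :
  valid_disks D -> exists p, forall q, max_nsqdist D p <= max_nsqdist D q.
Proof.
  intros HV; destruct D as [|d0 D'] eqn:HD.
  { exists (0, 0); intros q; simpl; lra. }
  rewrite <- HD in *.
  assert (Hd0 : In d0 D) by (rewrite HD; left; reflexivity).
  set (c := center d0); set (r := radius d0).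
  assert (Hr : 0 < r ^ 2) by (apply pow_lt, HV, Hd0).
  (* outside this square around c the term of d0 alone exceeds max_nsqdist D c *)
  set (s := max_nsqdist D c * r ^ 2 + 1).
  assert (Hs : 1 <= s) by (pose proof (max_nsqdist_ge0 D c); unfold s; nra).
  destruct (min_on_box (fun x y => max_nsqdist D (x, y))
              (fst c - s) (fst c + s) (snd c - s) (snd c + s)) as [x [y [Hx [Hy Hmin]]]];
    try lra.
  - intros x y0; apply lipschitz_continuity_pt with
      (fold_right (fun d acc => (2 * Rabs (y0 - snd (center d)) + 1) / radius d ^ 2 + acc) 0 D).
    intros y Hy; apply max_nsqdist_diff_le; intros d Hd; apply nsqdist_diff_snd; auto.
  - intros x0; eexists; intros x' y0 Hx.
    apply max_nsqdist_diff_le; intros d Hd; apply nsqdist_diff_fst; auto.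
  - exists (x, y); intros [qx qy].
    destruct (classic (fst c - s <= qx <= fst c + s /\ snd c - s <= qy <= snd c + s))
      as [[Hqx Hqy] | Hout]; [exact (Hmin qx qy Hqx Hqy)|].
    apply Rle_trans with (max_nsqdist D c).
    { destruct c as [cx cy]; apply Hmin; simpl; lra. }
    apply Rle_trans with (nsqdist d0 (qx, qy)); [|apply nsqdist_le_max, Hd0].
    apply (sqdist_ge_outside_square (qx, qy)) in Hout; [|exact Hs].
    unfold nsqdist; fold c r; apply Rmult_le_reg_r with (r ^ 2); [exact Hr|].
    unfold Rdiv; rewrite Rmult_assoc, Rinv_l by lra; unfold s in Hout; lra.
Qed.

Definition dot (u v : R * R) : R := fst u * fst v + snd u * snd v.

Definition nvec (d : disk) (p : R * R) : R * R :=
  ((fst p - fst (center d)) / radius d, (snd p - snd (center d)) / radius d).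

Lemma nsqdist_dot d p : 0 < radius d -> nsqdist d p = dot (nvec d p) (nvec d p).
Proof. intros Hr; unfold nsqdist, dot, nvec, sqdist; cbn [fst snd]; field; lra. Qed.

Lemma nsqdist_shift d p v t :
  0 < radius d ->
  nsqdist d (fst p + t * fst v, snd p + t * snd v)
  = nsqdist d p + 2 * dot (nvec d p) v / radius d * t + dot v v / radius d ^ 2 * t ^ 2.
Proof. intros Hr; unfold nsqdist, dot, nvec, sqdist; cbn [fst snd]; field; lra. Qed.

Lemma quadratic_lt_for_small_t e mu a b :
  e <= mu -> (e = mu -> a < 0) -> 0 <= b ->
  exists t0, 0 < t0 /\ forall t, 0 < t <= t0 -> e + a * t + b * t ^ 2 < mu.
Proof.
  intros He Ha Hb; destruct (Req_dec e mu) as [Heq | Hne].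
  - specialize (Ha Heq); exists (- a / (b + 1)); split.
    + apply Rdiv_lt_0_compat; lra.
    + intros t [Ht Ht0].
      assert (t * (b + 1) <= - a).
      { apply Rmult_le_reg_r with (/ (b + 1)); [apply Rinv_0_lt_compat; lra|].
        replace (t * (b + 1) * / (b + 1)) with t by (field; lra); exact Ht0. }
      nra.
  - set (k := Rabs a + b + 1).
    assert (Hk : 1 <= k) by (unfold k; pose proof (Rabs_pos a); lra).
    exists (Rmin 1 ((mu - e) / k)); split.
    + apply Rmin_pos; [lra | apply Rdiv_lt_0_compat; lra].
    + intros t [Ht Ht0].
      assert (Ht1 : t <= 1) by (eapply Rle_trans; [exact Ht0 | apply Rmin_l]).
      assert (Htk : t * k <= mu - e).
      { apply Rmult_le_reg_r with (/ k); [apply Rinv_0_lt_compat; lra|].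
        replace (t * k * / k) with t by (field; lra).
        eapply Rle_trans; [exact Ht0 | apply Rmin_r]. }
      assert (a * t <= Rabs a * t) by (apply Rmult_le_compat_r; [lra | apply Rle_abs]).
      assert (b * t ^ 2 <= b * t) by (apply Rmult_le_compat_l; [lra | nra]).
      unfold k in Htk; nra.
Qed.

Lemma small_enough_forall_in {A} (L : list A) (Q : A -> R -> Prop) :
  (forall x, In x L -> exists t0, 0 < t0 /\ forall t, 0 < t <= t0 -> Q x t) ->
  exists t0, 0 < t0 /\ forall x, In x L -> forall t, 0 < t <= t0 -> Q x t.
Proof.
  induction L as [|y L IH]; simpl; intros H.
  - exists 1; split; [lra | tauto].
  - destruct (H y (or_introl eq_refl)) as [t1 [Ht1 Q1]].
    destruct IH as [t2 [Ht2 Q2]]; [auto|].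
    exists (Rmin t1 t2); split; [apply Rmin_pos; assumption|].
    pose proof (Rmin_l t1 t2); pose proof (Rmin_r t1 t2).
    intros x [<- | Hx] t Ht; [apply Q1 | apply Q2]; auto; lra.
Qed.

Lemma exists_min_in {A} (P : A -> Prop) (h : A -> R) (L : list A) :
  (exists x, In x L /\ P x) ->
  exists z, In z L /\ P z /\ forall z', In z' L -> P z' -> h z <= h z'.
Proof.
  induction L as [|y L IH]; simpl; [firstorder|].
  intros Hex.
  destruct (classic (exists x, In x L /\ P x)) as [HL | HL].
  - destruct (IH HL) as [z [Hz [Pz Hmin]]].
    destruct (classic (P y /\ h y <= h z)) as [[Py Hy] | Hy].
    + exists y; repeat split; auto.
      intros z' [<- | Hz'] Pz'; [lra | eapply Rle_trans; eauto].
    + exists z; repeat split; auto.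
      intros z' [<- | Hz'] Pz'; auto.
      destruct (Rle_dec (h z) (h y)); [assumption | exfalso; apply Hy; split; [assumption | lra]].
  - exists y; destruct Hex as [x [[<- | Hx] Px]]; [|exfalso; eauto].
    repeat split; auto.
    intros z' [<- | Hz'] Pz'; [lra | exfalso; eauto].
Qed.

Lemma dot_orthogonal_expansion e f w :
  dot e f = 0 -> dot w w * dot e e * dot f f = dot w e ^ 2 * dot f f + dot w f ^ 2 * dot e e.
Proof.
  intros Hef.
  assert (E : dot w w * dot e e * dot f f - (dot w e ^ 2 * dot f f + dot w f ^ 2 * dot e e)
              = - dot e f * (2 * dot w e * dot w f - dot e f * dot w w))
    by (unfold dot; ring).
  rewrite Hef in E; lra.
Qed.

Lemma dot_sum_pos_within_angle u v w mu :
  0 < mu -> dot u u = mu -> dot v v = mu -> dot w w = mu ->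
  - mu / 2 < dot u v -> dot u v <= dot w u -> dot u v <= dot w v ->
  0 < dot w u + dot w v.
Proof.
  intros Hmu Hu Hv Hw Hangle HX HY.
  set (e := (fst u + fst v, snd u + snd v)); set (f := (fst u - fst v, snd u - snd v)).
  assert (I := dot_orthogonal_expansion e f w).
  replace (dot e f) with (dot u u - dot v v) in I by (unfold e, f, dot; simpl; ring).
  replace (dot e e) with (dot u u + dot v v + 2 * dot u v) in I by (unfold e, dot; simpl; ring).
  replace (dot f f) with (dot u u + dot v v - 2 * dot u v) in I by (unfold f, dot; simpl; ring).
  replace (dot w e) with (dot w u + dot w v) in I by (unfold e, dot; simpl; ring).
  replace (dot w f) with (dot w u - dot w v) in I by (unfold f, dot; simpl; ring).
  rewrite Hu, Hv, Hw in I; specialize (I ltac:(ring)).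
  clearbody e f; clear Hu Hv Hw.
  set (m := dot u v) in *; set (X := dot w u) in *; set (Y := dot w v) in *.
  clearbody m X Y.
  destruct (Rlt_or_le 0 (X + Y)) as [Hpos | Hs]; [exact Hpos | exfalso].
  (* with s = X + Y in [2m, 0] and |X - Y| <= s - 2m, the right side of I is at most
     8 m^2 (mu - m), less than the left side 4 mu (mu - m) (mu + m) *)
  set (s := X + Y) in *.
  assert (Hm : 2 * m <= s) by (unfold s; lra).
  assert (Hdiff : (X - Y) ^ 2 <= (s - 2 * m) ^ 2) by (unfold s; nra).
  assert (Hs2 : s ^ 2 <= 2 * m * s) by nra.
  assert (I2 : mu * (2 * mu + 2 * m) * (2 * mu - 2 * m)
               <= 4 * mu * s ^ 2 - 8 * m * (mu + m) * s + 8 * m ^ 2 * (mu + m)) by nra.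
  assert (I3 : 4 * mu * s ^ 2 <= 4 * mu * (2 * m * s)) by nra.
  assert (I4 : - 8 * m ^ 2 * s <= - 16 * m ^ 3) by nra.
  assert (Hpos : 0 < (mu - m) ^ 2 * (mu + 2 * m)) by (apply Rmult_lt_0_compat; nra).
  nra.
Qed.

Lemma max_nsqdist_descent D p a b :
  valid_disks D -> In a D -> In b D -> 0 < max_nsqdist D p ->
  nsqdist a p = max_nsqdist D p -> nsqdist b p = max_nsqdist D p ->
  - max_nsqdist D p / 2 < dot (nvec a p) (nvec b p) ->
  (forall d, In d D -> nsqdist d p = max_nsqdist D p ->
     dot (nvec a p) (nvec b p) <= dot (nvec d p) (nvec a p) /\
     dot (nvec a p) (nvec b p) <= dot (nvec d p) (nvec b p)) ->
  exists q, max_nsqdist D q < max_nsqdist D p.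
Proof.
  intros HV Ha Hb Hmu Hpa Hpb Hangle Hextremal.
  set (mu := max_nsqdist D p) in *.
  set (wa := nvec a p) in *; set (wb := nvec b p) in *.
  set (v := (- (fst wa + fst wb), - (snd wa + snd wb))).
  destruct (small_enough_forall_in D
              (fun d t => nsqdist d (fst p + t * fst v, snd p + t * snd v) < mu))
    as [t0 [Ht0 Hsmall]].
  - intros d Hd; assert (Hr := HV d Hd).
    destruct (quadratic_lt_for_small_t (nsqdist d p) mu
                (2 * dot (nvec d p) v / radius d) (dot v v / radius d ^ 2)) as [t1 [Ht1 Hq]].
    + apply nsqdist_le_max, Hd.
    + intros Hd_active.
      destruct (Hextremal d Hd Hd_active) as [HXa HXb].
      rewrite (nsqdist_dot a), (nsqdist_dot b), (nsqdist_dot d) in *; auto.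
      assert (Hsum := dot_sum_pos_within_angle wa wb (nvec d p) mu Hmu
                        Hpa Hpb Hd_active Hangle HXa HXb).
      replace (dot (nvec d p) v) with (- (dot (nvec d p) wa + dot (nvec d p) wb))
        by (unfold v, dot; simpl; ring).
      unfold Rdiv; assert (0 < / radius d) by (apply Rinv_0_lt_compat, Hr); nra.
    + apply Rmult_le_pos; [unfold dot; nra | apply Rlt_le, Rinv_0_lt_compat, pow_lt, Hr].
    + exists t1; split; [exact Ht1|]; intros t Ht; rewrite nsqdist_shift by exact Hr; auto.
  - exists (fst p + t0 * fst v, snd p + t0 * snd v).
    apply max_nsqdist_lt; [exact Hmu|]; intros d Hd; apply Hsmall; [exact Hd | lra].
Qed.

Lemma obtuse_active_pair_le a b p mu :
  0 < radius a -> 0 < radius b -> disks_intersect a b ->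
  nsqdist a p = mu -> nsqdist b p = mu -> dot (nvec a p) (nvec b p) <= - mu / 2 ->
  mu <= 4 / 3.
Proof.
  intros Hra Hrb Hab Ha Hb Hobtuse.
  assert (Hc := disks_intersect_sqdist a b Hab).
  unfold nsqdist, nvec, dot, sqdist in *; cbn [fst snd] in *.
  set (ra := radius a) in *; set (rb := radius b) in *.
  set (u1 := fst p - fst (center a)) in *; set (u2 := snd p - snd (center a)) in *.
  set (v1 := fst p - fst (center b)) in *; set (v2 := snd p - snd (center b)) in *.
  replace (fst (center a) - fst (center b)) with (v1 - u1) in Hc by (unfold u1, v1; ring).
  replace (snd (center a) - snd (center b)) with (v2 - u2) in Hc by (unfold u2, v2; ring).
  clearbody ra rb u1 u2 v1 v2.
  assert (Hu : u1 ^ 2 + u2 ^ 2 = mu * ra ^ 2) by (rewrite <- Ha; field; lra).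
  assert (Hv : v1 ^ 2 + v2 ^ 2 = mu * rb ^ 2) by (rewrite <- Hb; field; lra).
  assert (Huv : u1 * v1 + u2 * v2 <= - mu / 2 * (ra * rb)).
  { replace (u1 * v1 + u2 * v2) with ((u1 / ra * (v1 / rb) + u2 / ra * (v2 / rb)) * (ra * rb))
      by (field; lra).
    apply Rmult_le_compat_r; [nra | exact Hobtuse]. }
  assert (Hq : 0 < ra ^ 2 + ra * rb + rb ^ 2) by nra.
  assert (Hd : (v1 - u1) ^ 2 + (v2 - u2) ^ 2
               = u1 ^ 2 + u2 ^ 2 + (v1 ^ 2 + v2 ^ 2) - 2 * (u1 * v1 + u2 * v2)) by ring.
  rewrite Hu, Hv in Hd.
  assert (mu * (ra ^ 2 + ra * rb + rb ^ 2) <= (ra + rb) ^ 2) by nra.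
  assert (3 * (ra + rb) ^ 2 <= 4 * (ra ^ 2 + ra * rb + rb ^ 2))
    by (pose proof (pow2_ge_0 (ra - rb)); nra).
  clear Ha Hb Hobtuse; nra.
Qed.

Lemma exists_point_nsqdist_le D :
  valid_disks D -> pairwise_intersecting D -> exists p, forall d, In d D -> nsqdist d p <= 4 / 3.
Proof.
  intros HV HP; destruct (max_nsqdist_has_min D HV) as [p Hp]; exists p.
  intros d Hd; apply Rle_trans with (max_nsqdist D p); [apply nsqdist_le_max, Hd|].
  set (mu := max_nsqdist D p) in *.
  destruct (Rle_dec mu (4 / 3)) as [Hle | Hgt]; [exact Hle | exfalso].
  assert (Hmu : 0 < mu) by lra.
  destruct (max_nsqdist_attained D p Hmu) as [d1 [Hd1 Hact1]].
  (* among the active pairs, take one whose normalized vectors are furthest apart *)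
  destruct (exists_min_in (fun ab => nsqdist (fst ab) p = mu /\ nsqdist (snd ab) p = mu)
              (fun ab => dot (nvec (fst ab) p) (nvec (snd ab) p)) (list_prod D D))
    as [[a b] [Hab [[Ha Hb] Hextremal]]].
  { exists (d1, d1); split; [apply in_prod|]; auto. }
  apply in_prod_iff in Hab; destruct Hab as [HaD HbD]; cbn [fst snd] in *.
  destruct (Rle_dec (dot (nvec a p) (nvec b p)) (- mu / 2)) as [Hobtuse | Hacute].
  - apply Hgt, (obtuse_active_pair_le a b p); auto.
  - assert (Hangle : - mu / 2 < dot (nvec a p) (nvec b p)) by lra.
    destruct (max_nsqdist_descent D p a b HV HaD HbD Hmu Ha Hb Hangle) as [q Hq].
    + intros e He Hacte; split;
        [apply (Hextremal (e, a)) | apply (Hextremal (e, b))]; try apply in_prod; auto.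
    + specialize (Hp q); fold mu in Hq; lra.
Qed.

Lemma in_scaled_disk_of_nsqdist p d lam :
  0 < radius d -> 0 <= lam -> nsqdist d p <= lam ^ 2 -> in_disk p (scale_disk lam d).
Proof.
  intros Hr Hlam H; apply in_disk_sqdist; cbn [center radius scale_disk]; split; [nra|].
  unfold nsqdist in H; assert (Hr2 : 0 < radius d ^ 2) by (apply pow_lt, Hr).
  apply Rmult_le_reg_r with (/ radius d ^ 2); [apply Rinv_0_lt_compat, Hr2|].
  replace ((lam * radius d) ^ 2 * / radius d ^ 2) with (lam ^ 2) by (field; lra).
  exact H.
Qed.

Lemma sqrt3_sqr : sqrt 3 ^ 2 = 3.
Proof. rewrite <- Rsqr_pow2; apply Rsqr_sqrt; lra. Qed.

Lemma two_div_sqrt3_sqr : (2 / sqrt 3) ^ 2 = 4 / 3.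
Proof.
  assert (0 < sqrt 3) by (apply sqrt_lt_R0; lra).
  unfold Rdiv; rewrite Rpow_mult_distr, pow_inv, sqrt3_sqr; field.
Qed.

Definition triangle_disks : list disk :=
  mkDisk (0, 0) 1 :: mkDisk (2, 0) 1 :: mkDisk (1, sqrt 3) 1 :: nil.

Lemma triangle_disks_valid : valid_disks triangle_disks.
Proof. intros d Hd; simpl in Hd; repeat destruct Hd as [<- | Hd]; simpl; lra || contradiction. Qed.

Lemma triangle_disks_pairwise_intersecting : pairwise_intersecting triangle_disks.
Proof.
  assert (H3 := sqrt3_sqr).
  intros d1 d2 H1 H2; simpl in H1, H2.
  repeat destruct H1 as [<- | H1]; try contradiction;
    repeat destruct H2 as [<- | H2]; try contradiction;
    apply disks_intersect_of_sqdist; unfold sqdist; simpl; nra.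
Qed.

Lemma triangle_sum_sqdist_ge p :
  4 <= sqdist p (0, 0) + sqdist p (2, 0) + sqdist p (1, sqrt 3).
Proof.
  assert (H3 := sqrt3_sqr); unfold sqdist; cbn [fst snd].
  pose proof (pow2_ge_0 (fst p - 1)); pose proof (pow2_ge_0 (snd p - sqrt 3 / 3)).
  nra.
Qed.

Lemma scaled_triangle_disks_no_common_point lam :
  lam < 2 / sqrt 3 -> ~ common_point (map (scale_disk lam) triangle_disks).
Proof.
  intros Hlam [p Hp]; simpl in Hp.
  destruct (proj1 (in_disk_sqdist _ _) (Hp _ (or_introl eq_refl))) as [Hl H1].
  destruct (proj1 (in_disk_sqdist _ _) (Hp _ (or_intror (or_introl eq_refl)))) as [_ H2].
  destruct (proj1 (in_disk_sqdist _ _) (Hp _ (or_intror (or_intror (or_introl eq_refl)))))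
    as [_ H3].
  cbn [scale_disk center radius] in Hl, H1, H2, H3.
  assert (Hsq : lam ^ 2 < 4 / 3).
  { rewrite <- two_div_sqrt3_sqr; nra. }
  pose proof (triangle_sum_sqdist_ge p); nra.
Qed.

Theorem theorem6 :
  (forall D : list disk,
      valid_disks D -> pairwise_intersecting D ->
      common_point (map (scale_disk (2 / sqrt 3)) D))
  /\
  (forall lam : R, lam < 2 / sqrt 3 ->
      exists D : list disk,
        valid_disks D /\ pairwise_intersecting D /\
        ~ common_point (map (scale_disk lam) D)).
Proof.
  split.
  - intros D HV HP; destruct (exists_point_nsqdist_le D HV HP) as [p Hp]; exists p.
    intros d' Hd'; apply in_map_iff in Hd'; destruct Hd' as [d [<- Hd]].
    apply in_scaled_disk_of_nsqdist; [auto | | rewrite two_div_sqrt3_sqr; auto].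
    apply Rlt_le, Rdiv_lt_0_compat; [lra | apply sqrt_lt_R0; lra].
  - intros lam Hlam; exists triangle_disks; split; [|split].
    + exact triangle_disks_valid.
    + exact triangle_disks_pairwise_intersecting.
    + exact (scaled_triangle_disks_no_common_point lam Hlam).
Qed.
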